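(* An oriented tape graph $G$ is (isomorphic as a tape graph to) the positive spine $G_Q^+$ of some quadrangulation $Q$ of some occupied surface if and only if every boundary component of the thickening of $G$ contains a vertex of $G$ together with its two adjacent barrier half-sides (i.e. contains a breakpoint).
   Context: Tape graphs. - A tape graph is a finite graph together with, for each vertex $v$, a total ordering of the half-edges incident to $v$; a loop contributes two half-edges at its vertex. - The first and last half-edges at $v$ are the barrier half-edges. - An oriented tape graph is thickened to an oriented surface with boundary: each vertex becomes a disc, each edge an untwisted band, and at each vertex $v$ the bands of the half-edges $h_1<\dots<h_d$ are attached in anticlockwise order along an arc of the boundary of the vertex disc. - Each half-edge $h$ has two half-sides $h_-<h_+$ (the sides of its band near $v$), giving the order $h_{1-}<h_{1+}<\dots<h_{d-}<h_{d+}$ at $v$. Orientedness means that for an edge with half-edges $h,h'$, its two sides are $h_-\cup h'_+$ and $h'_-\cup h_+$. - The barrier half-sides at $v$ are $h_{1-}$ and $h_{d+}$; they are joined along the boundary of the thickening through the vertex at $v$. - A boundary component of the thickening passes through vertices $v_i$ between consecutive sides $s_{i-1},s_i$. The vertex $v_i$ is a breakpoint if $s_{i-1}$ is the maximal and $s_i$ the minimal side at $v_i$; that is, the boundary component passes from $h_{d+}$ to $h_{1-}$ at $v_i$. Occupied surfaces and spines. - An occupied surface $(\Sigma,V)$ is a compact oriented surface with a finite set $V\subset\partial\Sigma$ of $\pm$-signed vertices. It is required that every component has nonempty boundary, every boundary component contains vertices, and signs alternate along each boundary component. - A quadrangulation $Q$ is a set of disjoint properly embedded arcs joining vertices of opposite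 sign, cutting $\Sigma$ into squares (discs with four alternating vertices). - The positive spine $G_Q^+$ is the embedded graph with vertex set $V_+$ and, for each square, an edge given by the diagonal joining its positive vertices. - $G_Q^+$ is a tape graph: at each $v\in V_+\subset\partial\Sigma$, the incident half-edges are totally ordered anticlockwise, via the orientation of the closed interval of inward unit tangent directions at $v$. *)

From mathcomp Require Import all_boot.
Set Implicit Arguments. Unset Strict Implicit. Unset Printing Implicit Defensive.

(* Tape graphs.  Half-edges tH, vertex map tvert, edge pairing tmate  *)
(* (fixed-point-free involution; a loop = two half-edges at the same  *)
(* vertex), and at each vertex a total order of the incident          *)
(* half-edges given by a position tpos : the half-edges at v get the   *)
(* positions 0, ..., deg v - 1 bijectively (h_1 < ... < h_d).          *)

Record tape_graph := TapeGraph {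
  tV : finType;
  tH : finType;
  tvert : tH -> tV;
  tmate : tH -> tH;
  tmate_invol : forall h, tmate (tmate h) = h;
  tmate_fpf : forall h, tmate h != h;
  tpos : tH -> nat;
  tpos_inj : forall h h', tvert h = tvert h' -> tpos h = tpos h' -> h = h';
  tpos_range : forall h, tpos h < #|[pred h' | tvert h' == tvert h]|
}.

Definition tdeg (G : tape_graph) (v : tV G) : nat :=
  #|[pred h : tH G | tvert h == v]|.

Definition tsucc (G : tape_graph) (h : tH G) : tH G :=
  odflt h [pick h' | (tvert h' == tvert h) &&
                     (tpos h' == (tpos h).+1 %% tdeg (tvert h))].

(* Boundary walk of the oriented thickening.  Each side of the
   thickening is h'_- U h_+ with h' = tmate h; we record it by the
   half-side h_+ (i.e. by h).  Arriving at vertex v along h_+, the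
   boundary runs along the vertex disc to succ(h)_- and leaves along
   the side succ(h)_- U (tmate (succ h))_+ .  Hence the boundary
   components containing sides are the orbits of [bwalk]. *)
Definition bwalk (G : tape_graph) (h : tH G) : tH G := tmate (tsucc h).

(* A transition at v from h_+ to succ(h)_- is a breakpoint iff h is the
   maximal half-edge at v (then it goes from h_{d+} to h_{1-}). *)
Definition is_max_at_vertex (G : tape_graph) (h : tH G) : bool :=
  (tpos h).+1 == tdeg (tvert h).

(* Boundary components of the thickening are (a) the bwalk-orbits and
   (b) the boundary circles of discs of isolated vertices, which have no
   half-sides, hence no breakpoint. *)
Definition every_boundary_has_breakpoint (G : tape_graph) : Prop :=
  (forall v : tV G, exists h : tH G, tvert h = v) /\
  (forall h : tH G, exists h' : tH G, fconnect (@bwalk G) h h' && is_max_at_vertex h').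

(* Occupied surfaces with a quadrangulation, as gluings of squares.   *)
(* Each square s has corners 0,1,2,3 in anticlockwise order (w.r.t.   *)
(* the orientation of Sigma); corners 0,2 are positive, 1,3 negative. *)
(* Side k of s runs from corner k to corner k+1 (mod 4).  The          *)
(* involution qglue on sides pairs the two sides of each arc of Q;     *)
(* its fixed points are the boundary segments of Sigma.  Gluing is     *)
(* orientation reversing and sign preserving: side k of s glued to     *)
(* side j of s' identifies corner k with corner j+1 and corner k+1     *)
(* with corner j, so k and j have opposite parity.                     *)

Definition prev4 (k : 'I_4) : 'I_4 := inord ((k + 3) %% 4).
Definition opp4 (k : 'I_4) : 'I_4 := inord ((k + 2) %% 4).

Definition side_before (S : finType) (c : S * 'I_4) : S * 'I_4 :=
  (c.1, prev4 c.2).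

(* corner adjacency: corner (s,k) is identified with corner (s',j) where
   (s',j) = qglue (s,k-1) (across an arc).  Following this relation
   turns anticlockwise around the vertex. *)
Definition crel (S : finType) (gl : S * 'I_4 -> S * 'I_4) : rel (S * 'I_4) :=
  fun c c' => (gl (side_before c) != side_before c) && (c' == gl (side_before c)).

Record quad_surface := QuadSurface {
  qSq : finType;
  qglue : qSq * 'I_4 -> qSq * 'I_4;
  qglue_invol : forall x, qglue (qglue x) = x;
  qglue_parity : forall x, qglue x != x -> odd (qglue x).2 = ~~ odd x.2;
  (* every vertex lies on the boundary of Sigma (V is a subset of dSigma):
     going anticlockwise around any corner one reaches a boundary segment *)
  qvertex_boundary : forall c : qSq * 'I_4, exists c' : qSq * 'I_4,
      connect (crel qglue) c c' && (qglue (side_before c') == side_before c')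
}.

Definition same_vertex (X : quad_surface) (c c' : qSq X * 'I_4) : bool :=
  connect (crel (@qglue X)) c c' || connect (crel (@qglue X)) c' c.

Definition ccw_before (X : quad_surface) (c c' : qSq X * 'I_4) : bool :=
  (c != c') && connect (crel (@qglue X)) c c'.

(* G is isomorphic (as a tape graph) to the positive spine G_Q^+ of X:
   half-edges of G_Q^+ are the positive corners of squares (two per
   square, joined by the positive diagonal), vertices are the positive
   vertices of Sigma, ordered anticlockwise. *)
Definition spine_iso (G : tape_graph) (X : quad_surface) : Prop :=
  exists f : tH G -> qSq X * 'I_4,
    [/\ injective f,
        forall h, ~~ odd (f h).2,
        forall c : qSq X * 'I_4, ~~ odd c.2 -> exists h, f h = c &
        forall h, f (tmate h) = ((f h).1, opp4 (f h).2)] /\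
    [/\ forall v : tV G, exists h, tvert h = v,
        forall h h', tvert h = tvert h' <-> same_vertex (f h) (f h') &
        forall h h', tvert h = tvert h' -> (tpos h < tpos h' <-> ccw_before (f h) (f h'))].

Definition is_positive_spine (G : tape_graph) : Prop :=
  exists X : quad_surface, spine_iso G X.

(* The corners at a negative vertex of a quadrangulated surface, read
   anticlockwise, are the sides of one boundary component of the thickening of
   the positive spine, read backwards along the boundary walk; two consecutive
   such corners are separated by an arc of Q, except where the walk passes a
   breakpoint, where a boundary segment of the surface sits instead.  As every
   vertex lies on the boundary of the surface, every boundary component has a
   breakpoint.  Conversely, take one square per edge of G and glue the side
   before the corner of h to the side after the corner of succ h whenever h is
   not maximal at its vertex: positive vertices then reach the boundary at
   their maximal half-edge, negative vertices at a breakpoint. *)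
From mathcomp Require Import all_boot zify.
Set Implicit Arguments. Unset Strict Implicit. Unset Printing Implicit Defensive.

Section TapeGraph.
Variable G : tape_graph.
Implicit Types h g : tH G.

Lemma tpos_lt_tdeg h : tpos h < tdeg (tvert h).
Proof. exact: tpos_range. Qed.

Lemma tpos_surj (v : tV G) i : i < tdeg v -> exists h, tvert h = v /\ tpos h = i.
Proof.
move=> lt_i; set P := [pred h : tH G | tvert h == v].
have size_pos : size (map (@tpos G) (enum P)) = tdeg v by rewrite size_map -cardE.
have uniq_pos : uniq (map (@tpos G) (enum P)).
  rewrite map_inj_in_uniq ?enum_uniq // => x y; rewrite !mem_enum !inE.
  by move=> /eqP vx /eqP vy; apply: tpos_inj; rewrite vx vy.
have sub_pos : {subset map (@tpos G) (enum P) <= iota 0 (tdeg v)}.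
  move=> x /mapP [h]; rewrite mem_enum inE => /eqP <- ->.
  by rewrite mem_iota add0n tpos_lt_tdeg.
have [_ eq_pos] := uniq_min_size uniq_pos sub_pos (eq_leq (etrans (size_iota _ _) (esym size_pos))).
have : i \in iota 0 (tdeg v) by rewrite mem_iota add0n.
by rewrite -eq_pos => /mapP [h]; rewrite mem_enum inE => /eqP vh ->; exists h.
Qed.

Lemma tsuccP h :
  tvert (tsucc h) = tvert h /\ tpos (tsucc h) = (tpos h).+1 %% tdeg (tvert h).
Proof.
rewrite /tsucc; case: pickP => [h' /andP [/eqP -> /eqP ->] //|none].
have deg_gt0 : 0 < tdeg (tvert h) by have := tpos_lt_tdeg h; lia.
have [h' [vh' ph']] := tpos_surj (ltn_pmod (tpos h).+1 deg_gt0).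
by have := none h'; rewrite vh' ph' !eqxx.
Qed.

Lemma tsucc_nmax h : ~~ is_max_at_vertex h ->
  tvert (tsucc h) = tvert h /\ tpos (tsucc h) = (tpos h).+1.
Proof.
rewrite /is_max_at_vertex => nmax; have [-> ->] := tsuccP h; split => //.
by rewrite modn_small //; have := tpos_lt_tdeg h; lia.
Qed.

Lemma tsucc_inj : injective (@tsucc G).
Proof.
move=> h h' eq_succ; have [vs ps] := tsuccP h; have [vs' ps'] := tsuccP h'.
have vh : tvert h = tvert h' by rewrite -vs -vs' eq_succ.
apply: tpos_inj => //; move: ps ps'; rewrite eq_succ -vh => -> .
have := tpos_lt_tdeg h; have := tpos_lt_tdeg h'; rewrite -vh.
set d := tdeg _ => lt' lt.
have [eh|nh] := eqVneq (tpos h).+1 d; have [eh'|nh'] := eqVneq (tpos h').+1 d.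
- lia.
- rewrite eh modnn modn_small; lia.
- rewrite eh' modnn (modn_small (m := (tpos h).+1)); lia.
- rewrite !modn_small; lia.
Qed.

Definition tpred : tH G -> tH G := invF tsucc_inj.

Lemma tsuccK : cancel (@tsucc G) tpred. Proof. exact: invF_f. Qed.
Lemma tpredK : cancel tpred (@tsucc G). Proof. exact: f_invF. Qed.

Lemma bwalk_inj : injective (@bwalk G).
Proof. by move=> h h' /(congr1 (@tmate G)); rewrite !tmate_invol => /tsucc_inj. Qed.

End TapeGraph.

Definition next4 (k : 'I_4) : 'I_4 := inord ((k + 1) %% 4).

Lemma odd_prev4 k : odd (prev4 k) = ~~ odd k.
Proof. by case: k => [[|[|[|[|k]]]] //= ?]; rewrite /prev4 inordK. Qed.

Lemma odd_next4 k : odd (next4 k) = ~~ odd k.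
Proof. by case: k => [[|[|[|[|k]]]] //= ?]; rewrite /next4 inordK. Qed.

Lemma prev4_next4 k : prev4 (next4 k) = k.
Proof. by apply: val_inj; case: k => [[|[|[|[|k]]]] //= ?]; rewrite /prev4 /next4 !inordK. Qed.

Lemma prev4_prev4 k : prev4 (prev4 k) = opp4 k.
Proof. by apply: val_inj; case: k => [[|[|[|[|k]]]] //= ?]; rewrite /prev4 /opp4 !inordK. Qed.

Lemma prev4_opp4_prev4 k : prev4 (opp4 (prev4 k)) = k.
Proof. by apply: val_inj; case: k => [[|[|[|[|k]]]] //= ?]; rewrite /prev4 /opp4 !inordK. Qed.

Lemma connect_first_step (T : finType) (e : rel T) x y :
  connect e x y -> x != y -> exists2 z, e x z & connect e z y.
Proof.
move=> /connectP [[|z p] /= epath ->]; first by rewrite eqxx.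
by case/andP: epath => exz epath _; exists z => //; apply/connectP; exists p.
Qed.

Section QuadSurface.
Variable X : quad_surface.
Local Notation crelX := (crel (@qglue X)).

Lemma crel_functional c x y : crelX c x -> crelX c y -> x = y.
Proof. by move=> /andP [_ /eqP ->] /andP [_ /eqP ->]. Qed.

(* [crel] is functional, so a corner related to itself could never leave its
   own orbit and reach the boundary. *)
Lemma crel_irrefl c : ~~ crelX c c.
Proof.
apply/negP => loop; have [d /andP [/connectP [p cpath dlast] /eqP bnd]] := qvertex_boundary c.
suff last_c : last c p = c by move: loop; rewrite /crel -last_c -dlast bnd eqxx.
elim: p cpath {d dlast bnd} => //= x p IH /andP [cx ppath].
by move: ppath; rewrite (crel_functional cx loop); apply: IH.
Qed.

End QuadSurface.

(* The negative corner preceding the positive corner [f m]; for a spine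
   isomorphism [f] it plays the role of the side m_+ of the thickening. *)
Definition neg_corner (T : Type) (S : finType) (f : T -> S * 'I_4) (m : T) : S * 'I_4 :=
  ((f m).1, prev4 (f m).2).

Lemma side_before_neg_cornerE (T : Type) (S : finType) (f : T -> S * 'I_4) m :
  side_before (neg_corner f m) = ((f m).1, opp4 (f m).2).
Proof. by rewrite /side_before /= prev4_prev4. Qed.

Section Necessity.
Variables (G : tape_graph) (X : quad_surface) (f : tH G -> qSq X * 'I_4).
Hypothesis f_inj : injective f.
Hypothesis f_even : forall h, ~~ odd (f h).2.
Hypothesis f_onto : forall c : qSq X * 'I_4, ~~ odd c.2 -> exists h, f h = c.
Hypothesis f_mate : forall h, f (tmate h) = ((f h).1, opp4 (f h).2).
Hypothesis f_same_vertex : forall h h', tvert h = tvert h' <-> same_vertex (f h) (f h').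
Hypothesis f_ccw : forall h h', tvert h = tvert h' -> (tpos h < tpos h' <-> ccw_before (f h) (f h')).
Local Notation crelX := (crel (@qglue X)).
Implicit Types h g m : tH G.

Lemma crel_iso_step h c : crelX (f h) c ->
  exists h', [/\ c = f h', tvert h' = tvert h & tpos h < tpos h'].
Proof.
move=> hc; have /andP [glued /eqP ec] := hc.
have : ~~ odd c.2 by rewrite ec (qglue_parity glued) /side_before /= odd_prev4 f_even.
move=> /f_onto [h' fh']; exists h'; rewrite -fh' in hc *.
have vh : tvert h' = tvert h by apply/esym/f_same_vertex; rewrite /same_vertex (connect1 hc).
split => //; apply/(f_ccw (esym vh)); rewrite /ccw_before (connect1 hc) andbT.
by apply/eqP => eqf; move: hc; rewrite -eqf (negbTE (crel_irrefl _)).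
Qed.

Lemma crel_iso_max h c : is_max_at_vertex h -> ~~ crelX (f h) c.
Proof.
move=> /eqP hmax; apply/negP => /crel_iso_step [h' [_ vh lt]].
by have := tpos_lt_tdeg h'; rewrite vh -hmax; lia.
Qed.

Lemma crel_iso_succ h : ~~ is_max_at_vertex h -> crelX (f h) (f (tsucc h)).
Proof.
move=> nmax; have [vs ps] := tsucc_nmax nmax.
have : tpos h < tpos (tsucc h) by rewrite ps.
move=> /(f_ccw (esym vs)) /andP [ne path_succ].
have [c hc path'] := connect_first_step path_succ ne.
have [h1 [ec vh1 lt1]] := crel_iso_step hc; subst c.
have [<- //|ne1] := eqVneq (f h1) (f (tsucc h)).
suff : tpos h1 < tpos (tsucc h) by rewrite ps; lia.
by apply/f_ccw; [rewrite vs vh1 | rewrite /ccw_before ne1 path'].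
Qed.

Lemma crel_iso_eq_tsucc g h : crelX (f g) (f h) -> h = tsucc g.
Proof.
move=> hc; have nmax : ~~ is_max_at_vertex g.
  by apply: contraTN hc => /crel_iso_max ->.
exact/f_inj/(crel_functional hc (crel_iso_succ nmax)).
Qed.

Local Notation neg_corner := (neg_corner f).

Lemma side_before_iso_neg_corner m : side_before (neg_corner m) = f (tmate m).
Proof. by rewrite f_mate side_before_neg_cornerE. Qed.

Lemma crel_iso_neg_corner m c : crelX (neg_corner m) c ->
  exists g, c = neg_corner g /\ bwalk g = m.
Proof.
rewrite /crel side_before_iso_neg_corner => /andP [glued /eqP ec].
have odd_c : odd c.2 by rewrite ec (qglue_parity glued) f_even.
have [g fg] : exists g, f g = (c.1, next4 c.2) by apply: f_onto; rewrite odd_next4 odd_c.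
have sb_g : side_before (f g) = c by rewrite fg /side_before /= prev4_next4; case: (c).
have gc : crelX (f g) (f (tmate m)).
  by rewrite /crel sb_g ec qglue_invol eqxx andbT eq_sym.
exists g; split; first by rewrite /neg_corner fg /= prev4_next4; case: (c).
by rewrite /bwalk -(crel_iso_eq_tsucc gc) tmate_invol.
Qed.

Lemma boundary_iso_neg_corner m :
  qglue (side_before (neg_corner m)) = side_before (neg_corner m) ->
  exists g, is_max_at_vertex g /\ bwalk g = m.
Proof.
rewrite side_before_iso_neg_corner => bnd; exists (tpred (tmate m)).
split; last by rewrite /bwalk tpredK tmate_invol.
apply: contraT => /crel_iso_succ; rewrite tpredK => /andP [glued /eqP e].
by move: glued; rewrite -e -[side_before _]qglue_invol -e bnd eqxx.
Qed.

Lemma connect_iso_neg_corner m c : connect crelX (neg_corner m) c ->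
  exists m', c = neg_corner m' /\ fconnect (@bwalk G) m' m.
Proof.
move=> /connectP [p]; elim: p m => [|x p IH] m /=; first by move=> _ ->; exists m.
case/andP=> /crel_iso_neg_corner [g [-> bg]] cpath /(IH _ cpath) [m' [-> conn]].
exists m'; split => //; apply: connect_trans conn _; apply: connect1.
by rewrite /= bg.
Qed.

Lemma spine_iso_breakpoint h :
  exists h', fconnect (@bwalk G) h h' && is_max_at_vertex h'.
Proof.
have [d /andP [/connect_iso_neg_corner [m [-> conn]] /eqP bnd]] := qvertex_boundary (neg_corner h).
have [g [gmax bg]] := boundary_iso_neg_corner bnd.
exists g; rewrite gmax andbT fconnect_sym; last exact: bwalk_inj.
by apply: connect_trans conn; apply: connect1; rewrite /= bg.
Qed.

End Necessity.

(* The quadrangulated surface built from G has one square per edge, indexed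
   by the half-edge of the edge with smaller [enum_rank]: corner 0 of the
   square of h is that half-edge and corner 2 its mate. *)
Section Sufficiency.
Variable G : tape_graph.
Implicit Types h g m : tH G.

Definition edge_rep h : bool := enum_rank h < enum_rank (tmate h).

Lemma edge_rep_mate h : edge_rep (tmate h) = ~~ edge_rep h.
Proof.
rewrite /edge_rep tmate_invol.
suff : (enum_rank h : nat) != enum_rank (tmate h) by lia.
by rewrite (inj_eq val_inj) (inj_eq enum_rank_inj) eq_sym tmate_fpf.
Qed.

Definition tedge : finType := {h : tH G | edge_rep h}.
Implicit Types x : tedge * 'I_4.

Lemma edge_rep_edge h : edge_rep (if edge_rep h then h else tmate h).
Proof. by case: ifP => // /negbT; rewrite edge_rep_mate. Qed.

Definition edge_of h : tedge := exist edge_rep _ (edge_rep_edge h).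

Definition spine_corner h : tedge * 'I_4 :=
  (edge_of h, if edge_rep h then ord0 else inord 2).

Definition corner_half_edge (x : tedge * 'I_4) : tH G :=
  if val x.2 \in [:: 0; 3] then val x.1 else tmate (val x.1).

Lemma spine_cornerK : cancel spine_corner corner_half_edge.
Proof.
move=> h; rewrite /corner_half_edge /spine_corner /=.
by case: (edge_rep h); rewrite /= ?inordK ?tmate_invol.
Qed.

Lemma spine_corner_inj : injective spine_corner.
Proof. exact: can_inj spine_cornerK. Qed.

Lemma spine_corner_even h : ~~ odd (spine_corner h).2.
Proof. by rewrite /spine_corner /=; case: (edge_rep h); rewrite ?inordK. Qed.

Lemma edge_of_rep (e : tedge) : edge_of (val e) = e.
Proof. by apply: val_inj; rewrite /= (valP e). Qed.

Lemma edge_of_mate h : edge_of (tmate h) = edge_of h.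
Proof. by apply: val_inj; rewrite /= edge_rep_mate tmate_invol; case: (edge_rep h). Qed.

Lemma spine_corner_mate h :
  spine_corner (tmate h) = ((spine_corner h).1, opp4 (spine_corner h).2).
Proof.
rewrite /spine_corner edge_of_mate edge_rep_mate /=; congr pair.
by case: (edge_rep h); apply: val_inj; rewrite /opp4 /= !inordK.
Qed.

Lemma spine_corner_half_edge x : ~~ odd x.2 -> spine_corner (corner_half_edge x) = x.
Proof.
case: x => e [[|[|[|[|k]]]] //= lt] _; rewrite /corner_half_edge /spine_corner /=.
- by rewrite edge_of_rep (valP e); congr pair; apply: val_inj.
- rewrite edge_of_mate edge_of_rep edge_rep_mate (valP e).
  by congr pair; apply: val_inj; rewrite /= inordK.
Qed.

Lemma corner_half_edge_side_before h : corner_half_edge (side_before (spine_corner h)) = h.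
Proof.
rewrite /corner_half_edge /spine_corner /side_before /=.
by case: (edge_rep h); rewrite /prev4 !inordK //= tmate_invol.
Qed.

Lemma side_before_corner_half_edge x :
  odd x.2 -> side_before (spine_corner (corner_half_edge x)) = x.
Proof.
case: x => e [[|[|[|[|k]]]] //= lt] _; rewrite /corner_half_edge /spine_corner /side_before /=.
- rewrite edge_of_mate edge_of_rep edge_rep_mate (valP e).
  by congr pair; apply: val_inj; rewrite /prev4 /= !inordK.
- by rewrite edge_of_rep (valP e); congr pair; apply: val_inj; rewrite /prev4 /= inordK.
Qed.

Lemma odd_side_before_spine_corner h : odd (side_before (spine_corner h)).2.
Proof. by rewrite odd_prev4 spine_corner_even. Qed.

Lemma spine_side_cases x :
  (exists h, x = spine_corner h) \/ (exists h, x = side_before (spine_corner h)).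
Proof.
case odd_x: (odd x.2); [right|left]; exists (corner_half_edge x).
  by rewrite side_before_corner_half_edge.
by rewrite spine_corner_half_edge ?odd_x.
Qed.

(* Side k of a square runs from corner k to corner k+1, so the side before the
   corner of h is odd and the side after it is [spine_corner h] itself. *)
Definition spine_glue x : tedge * 'I_4 :=
  let h := corner_half_edge x in
  if odd x.2 then (if is_max_at_vertex h then x else spine_corner (tsucc h))
  else if is_max_at_vertex (tpred h) then x else side_before (spine_corner (tpred h)).

Lemma spine_glue_before h : ~~ is_max_at_vertex h ->
  spine_glue (side_before (spine_corner h)) = spine_corner (tsucc h).
Proof.
by move=> /negbTE nmax; rewrite /spine_glue odd_side_before_spine_corner corner_half_edge_side_before nmax.
Qed.

Lemma spine_glue_before_max h : is_max_at_vertex h ->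
  spine_glue (side_before (spine_corner h)) = side_before (spine_corner h).
Proof.
by move=> hmax; rewrite /spine_glue odd_side_before_spine_corner corner_half_edge_side_before hmax.
Qed.

Lemma spine_glue_after g : ~~ is_max_at_vertex g ->
  spine_glue (spine_corner (tsucc g)) = side_before (spine_corner g).
Proof.
move=> /negbTE nmax.
by rewrite /spine_glue (negbTE (spine_corner_even _)) spine_cornerK tsuccK nmax.
Qed.

Lemma spine_glue_after_max g : is_max_at_vertex g ->
  spine_glue (spine_corner (tsucc g)) = spine_corner (tsucc g).
Proof.
by move=> gmax; rewrite /spine_glue (negbTE (spine_corner_even _)) spine_cornerK tsuccK gmax.
Qed.

Lemma spine_glue_invol x : spine_glue (spine_glue x) = x.
Proof.
have [[h ->]|[h ->]] := spine_side_cases x.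
  rewrite -[h]tpredK; case/boolP: (is_max_at_vertex (tpred h)) => [gmax|nmax].
    by rewrite !spine_glue_after_max.
  by rewrite spine_glue_after // spine_glue_before.
case/boolP: (is_max_at_vertex h) => [hmax|nmax]; first by rewrite !spine_glue_before_max.
by rewrite spine_glue_before // spine_glue_after.
Qed.

Lemma spine_glue_parity x : spine_glue x != x -> odd (spine_glue x).2 = ~~ odd x.2.
Proof.
have [[h ->]|[h ->]] := spine_side_cases x.
  rewrite -[h]tpredK; case/boolP: (is_max_at_vertex (tpred h)) => [gmax|nmax].
    by rewrite spine_glue_after_max ?eqxx.
  by rewrite spine_glue_after // odd_side_before_spine_corner (negbTE (spine_corner_even _)).
case/boolP: (is_max_at_vertex h) => [hmax|nmax]; first by rewrite spine_glue_before_max ?eqxx.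
by rewrite spine_glue_before // odd_side_before_spine_corner (negbTE (spine_corner_even _)).
Qed.

Local Notation crelG := (crel spine_glue).
Local Notation on_boundary c := (spine_glue (side_before c) == side_before c).

Lemma crel_spine_corner h : ~~ is_max_at_vertex h ->
  crelG (spine_corner h) (spine_corner (tsucc h)).
Proof.
move=> nmax; rewrite /crel spine_glue_before // eqxx andbT.
apply: contraTneq (spine_corner_even (tsucc h)) => ->.
by rewrite odd_side_before_spine_corner.
Qed.

Lemma crel_spine_cornerP h x : crelG (spine_corner h) x ->
  ~~ is_max_at_vertex h /\ x = spine_corner (tsucc h).
Proof.
rewrite /crel; case/boolP: (is_max_at_vertex h) => [hmax|nmax].
  by rewrite spine_glue_before_max // eqxx.
by rewrite spine_glue_before // => /andP [_ /eqP].
Qed.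

Lemma connect_spine_corner h h' : tvert h = tvert h' -> tpos h <= tpos h' ->
  connect crelG (spine_corner h) (spine_corner h').
Proof.
move=> vh le_pos; have [k] : exists k, tpos h' = tpos h + k.
  by exists (tpos h' - tpos h); lia.
elim: k h vh {le_pos} => [|k IH] h vh pos_h'.
  by rewrite addn0 in pos_h'; rewrite (tpos_inj vh (esym pos_h')).
have nmax : ~~ is_max_at_vertex h.
  by rewrite /is_max_at_vertex; have := tpos_lt_tdeg h'; rewrite -vh; lia.
have [vs ps] := tsucc_nmax nmax.
apply: connect_trans (connect1 (crel_spine_corner nmax)) _.
by apply: IH; rewrite ?vs // ps; lia.
Qed.

Lemma connect_spine_cornerP h x : connect crelG (spine_corner h) x ->
  exists h', [/\ x = spine_corner h', tvert h' = tvert h & tpos h <= tpos h'].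
Proof.
move=> /connectP [p]; elim: p h => [|y p IH] h /=; first by move=> _ ->; exists h.
case/andP=> /crel_spine_cornerP [nmax ->] ypath /(IH _ ypath) [h' [-> vh' le']].
have [vs ps] := tsucc_nmax nmax.
by exists h'; split; [|rewrite vh' vs|move: le'; rewrite ps; lia].
Qed.

Local Notation neg_corner := (neg_corner spine_corner).

Lemma side_before_neg_corner_spine m : side_before (neg_corner m) = spine_corner (tmate m).
Proof. by rewrite spine_corner_mate side_before_neg_cornerE. Qed.

Lemma crel_neg_corner_spine g : ~~ is_max_at_vertex g ->
  crelG (neg_corner (bwalk g)) (neg_corner g).
Proof.
move=> nmax; rewrite /crel side_before_neg_corner_spine /bwalk tmate_invol.
rewrite spine_glue_after // eqxx andbT.
apply: contraTneq (odd_side_before_spine_corner g) => ->.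
by rewrite spine_corner_even.
Qed.

Lemma boundary_neg_corner_spine g : is_max_at_vertex g ->
  spine_glue (side_before (neg_corner (bwalk g))) = side_before (neg_corner (bwalk g)).
Proof.
by move=> gmax; rewrite side_before_neg_corner_spine /bwalk tmate_invol spine_glue_after_max.
Qed.

Lemma neg_corner_spine_onto x : odd x.2 -> exists m, x = neg_corner m.
Proof.
move=> odd_x; exists (tmate (corner_half_edge (side_before x))).
rewrite /neg_corner spine_corner_mate spine_corner_half_edge ?odd_prev4 ?odd_x //.
by rewrite /side_before /= prev4_opp4_prev4; case: (x).
Qed.

Lemma neg_corner_spine_reaches_boundary g n : is_max_at_vertex g ->
  exists c, connect crelG (neg_corner (iter n (@bwalk G) (bwalk g))) c && on_boundary c.
Proof.
move=> gmax; elim: n => [|n [c /andP [conn bnd]]].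
  by exists (neg_corner (bwalk g)); rewrite connect0 (boundary_neg_corner_spine gmax) eqxx.
rewrite iterS; set g' := iter n _ _.
case/boolP: (is_max_at_vertex g') => [g'max|nmax].
  by exists (neg_corner (bwalk g')); rewrite connect0 (boundary_neg_corner_spine g'max) eqxx.
by exists c; rewrite bnd andbT (connect_trans (connect1 (crel_neg_corner_spine nmax))).
Qed.

Lemma pos_corner_spine_reaches_boundary h :
  exists c, connect crelG (spine_corner h) c && on_boundary c.
Proof.
have : (tdeg (tvert h)).-1 < tdeg (tvert h) by have := tpos_lt_tdeg h; lia.
move=> /tpos_surj [h' [vh' ph']].
have h'max : is_max_at_vertex h' by rewrite /is_max_at_vertex ph' vh'; have := tpos_lt_tdeg h; lia.
exists (spine_corner h'); rewrite (spine_glue_before_max h'max) eqxx andbT.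
by apply: connect_spine_corner; [rewrite vh' | rewrite ph'; have := tpos_lt_tdeg h; lia].
Qed.

Hypothesis breakpoints :
  forall h, exists h', fconnect (@bwalk G) h h' && is_max_at_vertex h'.

Lemma spine_vertex_boundary x :
  exists c, connect crelG x c && on_boundary c.
Proof.
case/boolP: (odd x.2) => [/neg_corner_spine_onto [m ->]|/spine_corner_half_edge <-].
  have [g /andP [conn gmax]] := breakpoints m.
  have conn' : fconnect (@bwalk G) (bwalk g) m.
    rewrite fconnect_sym; last exact: bwalk_inj.
    exact: connect_trans conn (fconnect1 _ _).
  by rewrite -(iter_findex conn'); apply: neg_corner_spine_reaches_boundary.
exact: pos_corner_spine_reaches_boundary.
Qed.

Definition spine_surface : quad_surface :=
  {| qSq := tedge; qglue := spine_glue; qglue_invol := spine_glue_invol;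
     qglue_parity := spine_glue_parity; qvertex_boundary := spine_vertex_boundary |}.

Lemma spine_surface_same_vertex h h' :
  tvert h = tvert h' <-> @same_vertex spine_surface (spine_corner h) (spine_corner h').
Proof.
split=> [vh|]; last by case/orP => /connect_spine_cornerP [h2 [/spine_corner_inj -> vh _]].
have [le_pos|lt_pos] := leqP (tpos h) (tpos h').
  by apply/orP; left; apply: connect_spine_corner.
by apply/orP; right; apply: connect_spine_corner; rewrite // ltnW.
Qed.

Lemma spine_surface_ccw_before h h' : tvert h = tvert h' ->
  tpos h < tpos h' <-> @ccw_before spine_surface (spine_corner h) (spine_corner h').
Proof.
move=> vh; split=> [lt_pos|/andP [ne /connect_spine_cornerP [h2 [/spine_corner_inj eq_h _ le_pos]]]].
  apply/andP; split; last by apply: connect_spine_corner; rewrite // ltnW.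
  by rewrite (inj_eq spine_corner_inj); apply: contraTneq lt_pos => ->; rewrite ltnn.
subst h2; rewrite ltn_neqAle le_pos andbT.
by apply: contraNneq ne => /(tpos_inj vh) ->.
Qed.

End Sufficiency.

Theorem proposition4p5 (G : tape_graph) :
  is_positive_spine G <-> every_boundary_has_breakpoint G.
Proof.
split=> [[X [f [[f_inj f_even f_onto f_mate] [vert_nonempty f_same f_ccw]]]]|[vert_nonempty breakpoints]].
  by split=> // h; apply: (spine_iso_breakpoint f_inj f_even f_onto f_mate f_same f_ccw).
exists (spine_surface breakpoints), (@spine_corner G); split; split => //.
- exact: spine_corner_inj.
- exact: spine_corner_even.
- by move=> x /spine_corner_half_edge <-; eexists.
- exact: spine_corner_mate.
- exact: spine_surface_same_vertex.
- exact: spine_surface_ccw_before.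
Qed.
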